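(* Let $A$ be an integral domain containing $\mathbb{Q}$, let $R:=A/\mathbb{Q}^\times$ be the quotient hyperring, $\pi:A\to R$ the canonical projection, $X=(\operatorname{Spec}A,\mathcal{O}_X)$ the usual affine scheme and $Y=(\operatorname{Spec}R,\mathcal{O}_Y)$ the hyperring scheme of $R$. Then: (1) the map $\varphi:\operatorname{Spec}R\to\operatorname{Spec}A$, $\mathfrak{p}\mapsto\pi^{-1}(\mathfrak{p})$, is a homeomorphism; (2) for every nonempty open subset $U\subseteq X$, $\mathcal{O}_Y(\varphi^{-1}(U))\cong\mathcal{O}_X(U)/\mathbb{Q}^\times$ as hyperrings.
   Context: For a commutative ring $B$ and a subgroup $G$ of its unit group, the quotient hyperring $B/G$ is the set of cosets $bG$ with $(xG)(yG)=xyG$ and $xG+yG=\{qG\mid q=xt+ys,\ t,s\in G\}$; for nonempty $U$, $\mathcal{O}_X(U)$ is an integral domain containing $\mathbb{Q}$, so $\mathcal{O}_X(U)/\mathbb{Q}^\times$ is defined. $R$ is a hyperring without zero-divisors. Hyperrings, hyperideals ($a-rb\subseteq I$ for $a,b\in I$), prime hyperideals, and $\operatorname{Spec}R$ with the Zariski topology (closed sets $V(I)$) are as for rings. For a multiplicative submonoid $T$ of $R$, $T^{-1}R$ is $R\times T$ modulo $(r_1,t_1)\sim(r_2,t_2)\iff xr_1t_2=xr_2t_1$ for some $x\in T$, with $\frac{r_1}{t_1}+\frac{r_2}{t_2}=\{\frac y{t_1t_2}\mid y\in r_1t_2+t_1r_2\}$ and componentwise multiplication; $R_\mathfrak{p}=(R\setminus\mathfrak{p})^{-1}R$.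 The sheaf $\mathcal{O}_Y$: $\mathcal{O}_Y(V)$ is the set of maps $s:V\to\bigsqcup_{\mathfrak{p}\in V}R_\mathfrak{p}$, $s(\mathfrak{p})\in R_\mathfrak{p}$, such that each point of $V$ has a neighbourhood on which $s(\mathfrak{q})=\frac af$ for fixed $a,f\in R$ with $f\notin\mathfrak{q}$; multiplication is pointwise and $s+t=\{r\mid r(\mathfrak{p})\in s(\mathfrak{p})+t(\mathfrak{p})\ \forall\mathfrak{p}\in V\}$. *)

From HB Require Import structures.
From mathcomp Require Import all_boot all_algebra.
From mathcomp Require Import boolp classical_sets.

Set Implicit Arguments.
Unset Strict Implicit.
Unset Printing Implicit Defensive.

Import GRing.Theory.
Local Open Scope classical_set_scope.

Record hstruct := HStruct {
  hcar :> Type;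
  hadd : hcar -> hcar -> set hcar;
  hmul : hcar -> hcar -> hcar;
  hneg : hcar -> hcar }.

(* Choice of an element satisfying P (default d if none exists).  Used to
   turn operations defined "via representatives" into functions. *)
Definition pick_or {T : Type} (d : T) (P : T -> Prop) : T :=
  match pselect (exists x, P x) with
  | left h => proj1_sig (cid h)
  | right _ => d
  end.

Definition ring_hs (A : comNzRingType) : hstruct :=
  @HStruct A (fun x y => [set (x + y)%R]) (fun x y => (x * y)%R) (fun x => (- x)%R).

Definition hiso (B C : hstruct) : Prop :=
  exists g : B -> C, bijective g /\
    (forall x y, g (hmul x y) = hmul (g x) (g y)) /\
    (forall x y, g @` hadd x y = hadd (g x) (g y)).

Section HyperSpec.
Variable H : hstruct.

Definition hyperideal (I : set H) : Prop :=
  I !=set0 /\ forall a b r, I a -> I b -> hadd a (hneg (hmul r b)) `<=` I.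

Definition prime_hideal (I : set H) : Prop :=
  hyperideal I /\ I <> setT /\ forall x y, I (hmul x y) -> I x \/ I y.

Definition Spec := {p : set H | prime_hideal p}.

Definition zclosed (W : set Spec) : Prop :=
  exists I, hyperideal I /\ W = [set p | I `<=` proj1_sig p].
Definition zopen (W : set Spec) : Prop := zclosed (~` W).

(* Localization R_p = (R \ p)^{-1} R : classes of pairs (r, t), t ∉ p. *)
Definition cls (p : Spec) (r t : H) : set (H * H) :=
  [set rt | ~ proj1_sig p rt.2 /\
     exists x, ~ proj1_sig p x /\ hmul x (hmul r rt.2) = hmul x (hmul rt.1 t)].

Definition isrep (p : Spec) (c : set (H * H)) (r t : H) : Prop :=
  ~ proj1_sig p t /\ c = cls p r t.

Definition loc (p : Spec) := {c : set (H * H) | exists r t, isrep p c r t}.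

Definition lmul (p : Spec) (c d : loc p) : loc p :=
  pick_or c (fun e => exists r1 t1 r2 t2,
    isrep p (proj1_sig c) r1 t1 /\ isrep p (proj1_sig d) r2 t2 /\
    proj1_sig e = cls p (hmul r1 r2) (hmul t1 t2)).

Definition ladd (p : Spec) (c d : loc p) : set (loc p) :=
  [set e | exists r1 t1 r2 t2 y,
    isrep p (proj1_sig c) r1 t1 /\ isrep p (proj1_sig d) r2 t2 /\
    hadd (hmul r1 t2) (hmul t1 r2) y /\
    proj1_sig e = cls p y (hmul t1 t2)].

Definition lneg (p : Spec) (c : loc p) : loc p :=
  pick_or c (fun e => exists r t,
    isrep p (proj1_sig c) r t /\ proj1_sig e = cls p (hneg r) t).

(* Structure sheaf: sections over V ⊆ Spec that are locally fractions a/f. *)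
Definition pt (V : set Spec) := {p : Spec | V p}.

Definition islocfrac (V : set Spec) (s : forall q : pt V, loc (proj1_sig q)) : Prop :=
  forall q : pt V, exists W, zopen W /\ W (proj1_sig q) /\
    exists a f, forall q' : pt V, W (proj1_sig q') ->
      ~ proj1_sig (proj1_sig q') f /\
      proj1_sig (s q') = cls (proj1_sig q') a f.

Definition sect (V : set Spec) :=
  {s : forall q : pt V, loc (proj1_sig q) | islocfrac s}.

Definition smul (V : set Spec) (s t : sect V) : sect V :=
  pick_or s (fun r => forall q, proj1_sig r q = lmul (proj1_sig s q) (proj1_sig t q)).

Definition sadd (V : set Spec) (s t : sect V) : set (sect V) :=
  [set r | forall q, ladd (proj1_sig s q) (proj1_sig t q) (proj1_sig r q)].

Definition sneg (V : set Spec) (s : sect V) : sect V :=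
  pick_or s (fun r => forall q, proj1_sig r q = lneg (proj1_sig s q)).

Definition OS (V : set Spec) : hstruct :=
  @HStruct (sect V) (@sadd V) (@smul V) (@sneg V).

(* Quotient hyperring B/G (G a multiplicative subgroup of units of B). *)
Variable G : set H.

Definition hcoset (b : H) : set H := [set hmul b g | g in G].

Definition qcar := {S : set H | exists b, S = hcoset b}.

Definition qmul (X Y : qcar) : qcar :=
  pick_or X (fun Z => exists x y, proj1_sig X = hcoset x /\
    proj1_sig Y = hcoset y /\ proj1_sig Z = hcoset (hmul x y)).

Definition qadd (X Y : qcar) : set qcar :=
  [set Z | exists x y t s q, proj1_sig X = hcoset x /\ proj1_sig Y = hcoset y /\
     G t /\ G s /\ hadd (hmul x t) (hmul y s) q /\ proj1_sig Z = hcoset q].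

Definition qneg (X : qcar) : qcar :=
  pick_or X (fun Z => exists x, proj1_sig X = hcoset x /\
    proj1_sig Z = hcoset (hneg x)).

Definition quot : hstruct := @HStruct qcar qadd qmul qneg.

Definition qproj (b : H) : quot := exist _ (hcoset b) (ex_intro _ b erefl).

End HyperSpec.

Definition QA (A : idomainType) : set (ring_hs A) :=
  [set a | exists q : rat, q != 0%R /\ a = ratr q].

Definition QX (A : idomainType) (U : set (Spec (ring_hs A))) : set (OS U) :=
  [set s | exists q : rat, q != 0%R /\
     forall x, proj1_sig (proj1_sig s x) = cls (proj1_sig x) (ratr q : ring_hs A) 1%R].

Arguments QA : clear implicits.
Arguments QX {A} U.

From HB Require Import structures.
From mathcomp Require Import all_boot all_algebra.
From mathcomp Require Import boolp classical_sets.
From mathcomp Require Import ring.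

(* The projection pi : A -> A/Q^x is multiplicative and surjective, and pi a = pi b
   exactly when b = a q for a nonzero rational q.  Hence J |-> pi(J) and
   I |-> pi^-1(I) are inverse bijections between the hyperideals of A and of
   R = A/Q^x, preserving primality and the closed sets V(I): phi is a
   homeomorphism.
   In A and in R multiplication is cancellative and {0} is a prime, a generic
   point lying in every nonempty open set.  A section over an open set is
   therefore determined by its germ a/f at the generic point, and equals a/f
   wherever f is invertible.  The isomorphism matches a section of O_X with
   generic germ a/f and the section of O_Y with generic germ pi(a)/pi(f); two
   sections of O_X are matched with the same section of O_Y exactly when they
   differ by a constant factor in Q^x, and both hypersums are read off germs. *)

Set Implicit Arguments.
Unset Strict Implicit.
Unset Printing Implicit Defensive.
Local Open Scope classical_set_scope.

Local Notation germ s q := (proj1_sig (proj1_sig s q)).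

Lemma pick_orP {T : Type} (d : T) (P : T -> Prop) :
  (exists x, P x) -> P (pick_or d P).
Proof. by rewrite /pick_or; case: pselect => // h _; exact: proj2_sig (cid h). Qed.

Lemma proj1_sig_inj {T : Type} {P : T -> Prop} : injective (@proj1_sig T P).
Proof. by case=> a pa [b pb] /= E; exact: eq_exist. Qed.

Definition lfrac (H : hstruct) (p : Spec H) (r : H) {t : H} (ht : ~ proj1_sig p t) : loc p :=
  exist _ (cls p r t) (ex_intro _ r (ex_intro _ t (conj ht erefl))).

Lemma prime_notM (H : hstruct) (p : Spec H) (x y : H) :
  ~ proj1_sig p x -> ~ proj1_sig p y -> ~ proj1_sig p (hmul x y).
Proof. by case: p => P [_ [_ HP]] /= hx hy /HP []. Qed.

(* What the argument needs from both A and A/Q^x. *)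
Record cancellative_spec (H : hstruct) := CancellativeSpec {
  cs_one : H;
  cs_zero : H;
  cs_mulA : forall x y w : H, hmul x (hmul y w) = hmul (hmul x y) w;
  cs_mulC : forall x y : H, hmul x y = hmul y x;
  cs_mul1 : forall x : H, hmul cs_one x = x;
  cs_mulI : forall x y w : H, x <> cs_zero -> hmul x y = hmul x w -> y = w;
  cs_prime_one : forall p : Spec H, ~ proj1_sig p cs_one;
  cs_prime_zero : forall p : Spec H, proj1_sig p cs_zero;
  cs_generic : Spec H;
  cs_genericE : proj1_sig cs_generic = [set cs_zero];
  cs_basic_open : forall g, zopen [set q : Spec H | ~ proj1_sig q g] }.

Section CancellativeSpec.
Variables (H : hstruct) (S : cancellative_spec H).
Local Notation one := (cs_one S).
Local Notation zero := (cs_zero S).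
Local Notation eta := (cs_generic S).
Local Notation mulA := (cs_mulA S).
Local Notation mulC := (cs_mulC S).
Local Notation mul1 := (cs_mul1 S).
Local Notation mulI := (@cs_mulI _ S).
Local Notation prime_one := (@cs_prime_one _ S).
Local Notation prime_zero := (@cs_prime_zero _ S).

Lemma cs_mulCA (x y w : H) : hmul x (hmul y w) = hmul y (hmul x w).
Proof. by rewrite mulA (mulC x y) -mulA. Qed.

Lemma ac_pull (x y R R' : H) : R = hmul x R' -> hmul y R = hmul x (hmul y R').
Proof. by move->; rewrite cs_mulCA. Qed.

Lemma ac_cancel (x L R R' : H) : R = hmul x R' -> L = R' -> hmul x L = R.
Proof. by move=> -> ->. Qed.

(* Proves equalities of products up to associativity and commutativity: after
   right-associating, each leading factor of the left side is pulled to the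
   front of the right side and cancelled. *)
Ltac ac_find := first [ reflexivity | exact: mulC | apply: ac_pull; ac_find ].
Ltac ac_loop := first [ reflexivity |
  match goal with |- hmul ?x ?L = ?R => apply: (@ac_cancel x L R); [ac_find | ac_loop] end ].
Ltac ac := rewrite -?mulA; ac_loop.

Lemma notin_prime_neq0 (p : Spec H) (x : H) : ~ proj1_sig p x -> x <> zero.
Proof. by move=> h E; apply: h; rewrite E; exact: prime_zero. Qed.

Lemma notin_generic (x : H) : ~ proj1_sig eta x <-> x <> zero.
Proof. by rewrite cs_genericE. Qed.

Lemma cs_mul_neq0 (x y : H) : x <> zero -> y <> zero -> hmul x y <> zero.
Proof. by move=> /notin_generic hx /notin_generic hy; apply/notin_generic/prime_notM. Qed.

Lemma zopen_generic (W : set (Spec H)) (q : Spec H) : zopen W -> W q -> W eta.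
Proof.
move=> [I [_ EI]] Wq; apply: contrapT => Ne.
have : (~` W) eta by [].
rewrite EI /= cs_genericE => sI.
have : (~` W) q by rewrite EI => x /sI ->; exact: prime_zero.
by [].
Qed.

Lemma cls_sub (p : Spec H) (r t r' t' u : H) :
  ~ proj1_sig p t -> ~ proj1_sig p t' -> ~ proj1_sig p u ->
  hmul u (hmul r t') = hmul u (hmul r' t) -> cls p r t `<=` cls p r' t'.
Proof.
move=> ht ht' hu E [r2 t2] /= [ht2 [x [hx Ex]]]; split => //.
exists (hmul (hmul x u) t); split; first by do 2?apply: prime_notM.
have -> : hmul (hmul (hmul x u) t) (hmul r' t2)
         = hmul (hmul x t2) (hmul u (hmul r' t)) by ac.
have -> : hmul (hmul x t2) (hmul u (hmul r' t)) = hmul (hmul u t') (hmul x (hmul r t2)).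
  by rewrite -E; ac.
by rewrite Ex; ac.
Qed.

Lemma cls_eq (p : Spec H) (r t r' t' u : H) :
  ~ proj1_sig p t -> ~ proj1_sig p t' -> ~ proj1_sig p u ->
  hmul u (hmul r t') = hmul u (hmul r' t) -> cls p r t = cls p r' t'.
Proof.
by move=> ht ht' hu E; apply/seteqP; split; [exact: cls_sub E | exact: cls_sub (esym E)].
Qed.

Lemma cls_eq_cross (p : Spec H) (r t r' t' : H) :
  ~ proj1_sig p t -> ~ proj1_sig p t' ->
  hmul r t' = hmul r' t -> cls p r t = cls p r' t'.
Proof.
by move=> ht ht' E; apply: (cls_eq (u := one)) => //; [exact: prime_one | rewrite !mul1].
Qed.

Lemma cls_eq_inv (p : Spec H) (r t r' t' : H) : ~ proj1_sig p t' ->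
  cls p r t = cls p r' t' ->
  exists2 u, ~ proj1_sig p u & hmul u (hmul r t') = hmul u (hmul r' t).
Proof.
move=> ht' E; have : cls p r' t' (r', t').
  by split => //; exists one; split => //; exact: prime_one.
by rewrite -E => -[_ [u []]]; exists u.
Qed.

Lemma cls_generic_cross (r t r' t' : H) : t' <> zero ->
  cls eta r t = cls eta r' t' -> hmul r t' = hmul r' t.
Proof.
move=> /notin_generic ht' /(cls_eq_inv ht') [u hu].
exact/mulI/(notin_prime_neq0 hu).
Qed.

Lemma lmul_cls (p : Spec H) (c d : loc p) (r1 t1 r2 t2 : H) :
  isrep p (proj1_sig c) r1 t1 -> isrep p (proj1_sig d) r2 t2 ->
  proj1_sig (lmul c d) = cls p (hmul r1 r2) (hmul t1 t2).
Proof.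
move=> [h1 E1] [h2 E2]; have h12 := prime_notM h1 h2.
have Hex : exists e : loc p, exists r1 t1 r2 t2,
    isrep p (proj1_sig c) r1 t1 /\ isrep p (proj1_sig d) r2 t2 /\
    proj1_sig e = cls p (hmul r1 r2) (hmul t1 t2).
  exists (lfrac (hmul r1 r2) h12).
  by exists r1, t1, r2, t2.
have [r1' [t1' [r2' [t2' [[h1' E1'] [[h2' E2'] ->]]]]]] := @pick_orP _ c _ Hex.
rewrite E1 in E1'; rewrite E2 in E2'.
have [u1 hu1 Eu1] := cls_eq_inv h1' E1'.
have [u2 hu2 Eu2] := cls_eq_inv h2' E2'.
apply: (cls_eq (u := hmul u1 u2)); [exact: prime_notM | exact: h12 | exact: prime_notM |].
have -> : hmul (hmul u1 u2) (hmul (hmul r1' r2') (hmul t1 t2)) =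
          hmul (hmul u1 (hmul r1' t1)) (hmul u2 (hmul r2' t2)) by ac.
by rewrite -Eu1 -Eu2; ac.
Qed.

Section GenericGerm.
Variable V : set (Spec H).
Hypothesis V_eta : V eta.
Let etaV : pt V := exist _ eta V_eta.

Lemma germ_generic_of (s : sect V) (q : pt V) (a f : H) : ~ proj1_sig (proj1_sig q) f ->
  germ s q = cls (proj1_sig q) a f -> germ s etaV = cls eta a f.
Proof.
move=> hf Eq; have [W [oW [Wq [a0 [f0 s_loc]]]]] := proj2_sig s q.
have [hf0 E0] := s_loc q Wq; rewrite Eq in E0.
have [u hu Eu] := cls_eq_inv hf0 E0.
have [_ ->] := s_loc etaV (zopen_generic oW Wq).
apply: cls_eq_cross; first exact/notin_generic/(notin_prime_neq0 hf0).
  exact/notin_generic/(notin_prime_neq0 hf).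
exact/esym/(mulI (notin_prime_neq0 hu) Eu).
Qed.

Definition generic_germ (s : sect V) (a f : H) : Prop := isrep eta (germ s etaV) a f.

Lemma generic_germ_exists (s : sect V) : exists a f, generic_germ s a f.
Proof. by have [a [f h]] := proj2_sig (proj1_sig s etaV); exists a, f. Qed.

Lemma generic_germ_neq0 (s : sect V) (a f : H) : generic_germ s a f -> f <> zero.
Proof. by move=> [/notin_generic]. Qed.

Lemma generic_germ_cross (s : sect V) (a f a' f' : H) :
  generic_germ s a f -> f' <> zero -> hmul a f' = hmul a' f -> generic_germ s a' f'.
Proof.
move=> [hf E] /notin_generic hf' Ea; split => //.
by rewrite E; exact: cls_eq_cross.
Qed.

Lemma generic_germ_crossE (s : sect V) (a f a' f' : H) :
  generic_germ s a f -> generic_germ s a' f' -> hmul a f' = hmul a' f.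
Proof.
move=> [_ E] [hf' E']; apply: cls_generic_cross; first exact/notin_generic.
by rewrite -E -E'.
Qed.

Lemma generic_germ_local (s : sect V) (q : pt V) (a f : H) : generic_germ s a f ->
  exists a' f', [/\ ~ proj1_sig (proj1_sig q) f',
    germ s q = cls (proj1_sig q) a' f' & hmul a' f = hmul a f'].
Proof.
move=> [/notin_generic hf Ee]; have [a0 [f0 [hf0 E0]]] := proj2_sig (proj1_sig s q).
exists a0, f0; split => //.
have := germ_generic_of hf0 E0; rewrite Ee.
by move=> /(cls_generic_cross (notin_prime_neq0 hf0)).
Qed.

Lemma generic_germ_at (s : sect V) (q : pt V) (a f : H) :
  generic_germ s a f -> ~ proj1_sig (proj1_sig q) f -> germ s q = cls (proj1_sig q) a f.
Proof.
move=> hs hf; have [a0 [f0 [hf0 -> E]]] := generic_germ_local q hs.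
by apply: cls_eq_cross.
Qed.

Lemma generic_germ_inj (s1 s2 : sect V) (a f : H) :
  generic_germ s1 a f -> generic_germ s2 a f -> s1 = s2.
Proof.
move=> h1 h2; apply: proj1_sig_inj; apply: functional_extensionality_dep => q.
apply: proj1_sig_inj; have [a' [f' [hf' -> E]]] := generic_germ_local q h1.
by rewrite (generic_germ_at (generic_germ_cross h2 (notin_prime_neq0 hf') (esym E)) hf').
Qed.

Lemma islocfrac_cross (a f : H) (s : forall q : pt V, loc (proj1_sig q)) : f <> zero ->
  (forall q : pt V, exists b g, [/\ ~ proj1_sig (proj1_sig q) g,
     proj1_sig (s q) = cls (proj1_sig q) b g & hmul b f = hmul a g]) ->
  islocfrac s.
Proof.
move=> hf Hs q; have [b [g [hg Eq Eb]]] := Hs q.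
exists [set q : Spec H | ~ proj1_sig q g]; split; first exact: (cs_basic_open S).
split => //; exists b, g => q' hq'; split => //.
have [b' [g' [hg' Eq' Eb']]] := Hs q'.
rewrite Eq'; apply: cls_eq_cross => //; apply: (mulI hf).
have -> : hmul f (hmul b' g) = hmul (hmul b' f) g by ac.
have -> : hmul f (hmul b g') = hmul (hmul b f) g' by ac.
by rewrite Eb Eb'; ac.
Qed.

Lemma smul_exists (s t : sect V) :
  exists r : sect V, forall q, proj1_sig r q = lmul (proj1_sig s q) (proj1_sig t q).
Proof.
have [a [f hs]] := generic_germ_exists s; have [b [g ht]] := generic_germ_exists t.
have Hl : islocfrac (fun q => lmul (proj1_sig s q) (proj1_sig t q)).
  apply: (@islocfrac_cross (hmul a b) (hmul f g)).
    exact: cs_mul_neq0 (generic_germ_neq0 hs) (generic_germ_neq0 ht).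
  move=> q; have [a' [f' [hf' Eq Ea]]] := generic_germ_local q hs.
  have [b' [g' [hg' Eq' Eb]]] := generic_germ_local q ht.
  exists (hmul a' b'), (hmul f' g'); split; first exact: prime_notM.
    exact: lmul_cls.
  have -> : hmul (hmul a' b') (hmul f g) = hmul (hmul a' f) (hmul b' g) by ac.
  by rewrite Ea Eb; ac.
by exists (exist _ _ Hl).
Qed.

Lemma smulE (s t : sect V) q :
  proj1_sig (smul s t) q = lmul (proj1_sig s q) (proj1_sig t q).
Proof. by rewrite /smul; have := @pick_orP _ s _ (smul_exists s t) => ->. Qed.

Lemma generic_germM (s t : sect V) (a f b g : H) :
  generic_germ s a f -> generic_germ t b g ->
  generic_germ (smul s t) (hmul a b) (hmul f g).
Proof.
move=> [hf Es] [hg Et]; split; first exact: prime_notM.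
by rewrite smulE; exact: lmul_cls.
Qed.

Lemma sect_of_generic (a f : H) : f <> zero ->
  (forall q : pt V, exists b g, ~ proj1_sig (proj1_sig q) g /\ hmul b f = hmul a g) ->
  exists s : sect V, generic_germ s a f.
Proof.
move=> hf hfrac.
have pick (q : pt V) :
    {bg : H * H | ~ proj1_sig (proj1_sig q) bg.2 /\ hmul bg.1 f = hmul a bg.2}.
  by apply: cid; have [b [g h]] := hfrac q; exists (b, g).
pose s q := lfrac (proj1_sig (pick q)).1 (proj1 (proj2_sig (pick q))).
have hs : islocfrac s.
  apply: (@islocfrac_cross a f) => // q.
  by exists (proj1_sig (pick q)).1, (proj1_sig (pick q)).2; case: (proj2_sig (pick q)).
exists (exist _ s hs); split; first exact/notin_generic.
rewrite /= /s /=; case: (proj2_sig (pick etaV)) => hg Eb.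
by apply: cls_eq_cross => //; exact/notin_generic.
Qed.

Lemma smulA (s t r : sect V) : smul s (smul t r) = smul (smul s t) r.
Proof.
have [a [f hs]] := generic_germ_exists s; have [b [g ht]] := generic_germ_exists t.
have [c [h hr]] := generic_germ_exists r.
apply: generic_germ_inj (generic_germM hs (generic_germM ht hr)) _.
by rewrite !mulA; exact: generic_germM (generic_germM hs ht) hr.
Qed.

Lemma smulC (s t : sect V) : smul s t = smul t s.
Proof.
have [a [f hs]] := generic_germ_exists s; have [b [g ht]] := generic_germ_exists t.
apply: generic_germ_inj (generic_germM hs ht) _.
by rewrite (mulC a) (mulC f); exact: generic_germM.
Qed.

Lemma const_islocfrac (c : H) :
  islocfrac (fun q : pt V => lfrac c (@cs_prime_one _ S (proj1_sig q))).
Proof.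
apply: (@islocfrac_cross c one); first exact/notin_generic/prime_one.
by move=> q; exists c, one; split => //; exact: prime_one.
Qed.

Definition const_sect (c : H) : sect V := exist _ _ (const_islocfrac c).

Lemma generic_germ_const (c : H) : generic_germ (const_sect c) c one.
Proof. by split => //; exact: prime_one. Qed.

Lemma const_sectM (c d : H) : smul (const_sect c) (const_sect d) = const_sect (hmul c d).
Proof.
apply: generic_germ_inj (generic_germM (generic_germ_const c) (generic_germ_const d)) _.
by rewrite mul1; exact: generic_germ_const.
Qed.

Lemma smul1s (s : sect V) : smul (const_sect one) s = s.
Proof.
have [a [f hs]] := generic_germ_exists s.
by apply: generic_germ_inj (generic_germM (generic_germ_const one) hs) _; rewrite !mul1.
Qed.

End GenericGerm.
End CancellativeSpec.

Section QuotientHyperring.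
Variables (H : hstruct) (G : set H) (e : H).
Hypothesis mulA : forall x y w : H, hmul x (hmul y w) = hmul (hmul x y) w.
Hypothesis mulC : forall x y : H, hmul x y = hmul y x.
Hypothesis mul1 : forall x : H, hmul e x = x.
Hypothesis G1 : G e.
Hypothesis GM : forall g h, G g -> G h -> G (hmul g h).
Hypothesis GV : forall g, G g -> exists2 g', G g' & hmul g g' = e.

Lemma hcoset_eqP (x y : H) : hcoset G x = hcoset G y <-> exists2 g, G g & y = hmul x g.
Proof.
split.
  have : hcoset G y y by exists e => //; rewrite mulC mul1.
  by move=> + E; rewrite -E => -[g Gg <-]; exists g.
move=> [g Gg ->]; apply/seteqP; split => w [h Gh <-].
  have [g' Gg' Eg] := GV Gg; exists (hmul g' h); first exact: GM.
  by rewrite -mulA (mulA g) Eg mul1.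
by exists (hmul g h); [exact: GM | rewrite mulA].
Qed.

Lemma qproj_eqP (x y : H) : qproj G x = qproj G y <-> exists2 g, G g & y = hmul x g.
Proof.
by rewrite -hcoset_eqP; split => [[]|E] //; exact: proj1_sig_inj.
Qed.

Lemma qproj_surj (X : quot G) : exists b, X = qproj G b.
Proof. by case: X => S [b E]; exists b; exact: proj1_sig_inj. Qed.

Lemma qprojM (x y : H) : @hmul (quot G) (qproj G x) (qproj G y) = qproj G (hmul x y).
Proof.
have Hex : exists Z : qcar G, exists x' y', proj1_sig (qproj G x) = hcoset G x' /\
    proj1_sig (qproj G y) = hcoset G y' /\ proj1_sig Z = hcoset G (hmul x' y').
  by exists (qproj G (hmul x y)), x, y.
have [x' [y' [/hcoset_eqP [g Gg ->] [/hcoset_eqP [h Gh ->] E]]]] :=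
  @pick_orP _ (qproj G x) _ Hex.
apply: proj1_sig_inj; rewrite [LHS]E /=; apply/esym/hcoset_eqP.
exists (hmul g h); first exact: GM.
by rewrite -mulA (mulA g) (mulC g y) -mulA mulA.
Qed.

Lemma qproj_haddP (x y : H) (Z : quot G) :
  @hadd (quot G) (qproj G x) (qproj G y) Z <->
  exists t s q, [/\ G t, G s, hadd (hmul x t) (hmul y s) q & Z = qproj G q].
Proof.
split; last by move=> [t [s [q [Gt Gs Hq ->]]]]; exists x, y, t, s, q.
move=> [x' [y' [t [s [q [/hcoset_eqP [g Gg ->] [/hcoset_eqP [h Gh ->]
  [Gt [Gs [Hq EZ]]]]]]]]]].
exists (hmul g t), (hmul h s), q; split; [exact: GM | exact: GM | by rewrite !mulA |].
exact: proj1_sig_inj.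
Qed.

Lemma qprojN (negM : forall x g, G g -> hneg (hmul x g) = hmul (hneg x) g) (x : H) :
  @hneg (quot G) (qproj G x) = qproj G (hneg x).
Proof.
have Hex : exists Z : qcar G, exists x', proj1_sig (qproj G x) = hcoset G x' /\
    proj1_sig Z = hcoset G (hneg x').
  by exists (qproj G (hneg x)), x.
have [x' [/hcoset_eqP [g Gg ->] E]] := @pick_orP _ (qproj G x) _ Hex.
apply: proj1_sig_inj; rewrite [LHS]E /=; apply/esym/hcoset_eqP.
by exists g; last exact: negM.
Qed.

End QuotientHyperring.

Import GRing.Theory.

Section RatEmbedding.
Local Open Scope ring_scope.
Variable R : comUnitRingType.
Hypothesis hQ : forall n : nat, ((n.+1)%:R : R) \is a GRing.unit.

Lemma intr_unit (m : int) : m != 0 -> (m%:~R : R) \is a GRing.unit.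
Proof. by case: m => [[|n]|n] //= _; rewrite ?NegzE ?rmorphN ?unitrN hQ. Qed.

Lemma ratr1 : ratr 1 = 1 :> R.
Proof. by rewrite /ratr divr1. Qed.

Lemma ratrM (x y : rat) : ratr (x * y) = ratr x * ratr y :> R.
Proof.
have den_unit z : ((denq z)%:~R : R) \is a GRing.unit by apply/intr_unit/denq_neq0.
rewrite /ratr mulrC mulrAC; apply: canLR (mulKr (den_unit _)) _; rewrite !mulrA.
do 2!apply: canRL (mulrK (den_unit _)) _; rewrite -!rmorphM; congr _%:~R.
apply: (@intr_inj rat); rewrite !rmorphM [x * y]lock /= !numqE -lock.
by rewrite -!mulrA mulrA mulrCA -!mulrA (mulrCA y).
Qed.

Lemma ratr_unit (x : rat) : x != 0 -> (ratr x : R) \is a GRing.unit.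
Proof.
move=> hx; rewrite /ratr unitrM unitrV !intr_unit ?denq_neq0 //.
by rewrite numq_eq0.
Qed.

Lemma ratrV (x : rat) : x != 0 -> ratr x * ratr x^-1 = 1 :> R.
Proof. by move=> hx; rewrite -ratrM divff // ratr1. Qed.

End RatEmbedding.

Section QuotientByRationals.
Local Open Scope ring_scope.
Variable A : idomainType.
Hypothesis hQ : forall n : nat, ((n.+1)%:R : A) \is a GRing.unit.

Local Notation HA := (ring_hs A).
Local Notation R := (quot (QA A)).
Local Notation pi := (qproj (QA A)).

Lemma QA1 : QA A (1 : A).
Proof. by exists 1; rewrite ratr1. Qed.

Lemma QAM (g h : HA) : QA A g -> QA A h -> QA A (hmul g h).
Proof.
move=> [q [hq ->]] [r [hr ->]]; exists (q * r).
by rewrite mulf_neq0 //= ratrM.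
Qed.

Lemma QAV (g : HA) : QA A g -> exists2 g', QA A g' & @hmul HA g g' = 1.
Proof.
move=> [q [hq ->]]; exists (ratr q^-1); last exact: ratrV.
by exists q^-1; rewrite invr_eq0.
Qed.

Lemma QA_neq0 (g : A) : QA A g -> g != 0.
Proof. by move=> [q [hq ->]]; apply: contraTneq (ratr_unit hQ hq) => ->; rewrite unitr0. Qed.

Let mulHA : forall x y w : HA, hmul x (hmul y w) = hmul (hmul x y) w := @mulrA A.
Let mulHC : forall x y : HA, hmul x y = hmul y x := @mulrC A.
Let mulH1 : forall x : HA, @hmul HA 1 x = x := @mul1r A.

Lemma piM (x y : A) : hmul (pi x) (pi y) = pi (x * y).
Proof. exact: qprojM mulHA mulHC mulH1 QA1 QAM QAV _ _. Qed.

Lemma pi_eqP (x y : A) : pi x = pi y <-> exists2 g, QA A g & y = x * g.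
Proof. exact: qproj_eqP mulHA mulHC mulH1 QA1 QAM QAV _ _. Qed.

Lemma pi_haddP (x y : A) (Z : R) :
  hadd (pi x) (pi y) Z <-> exists t s, [/\ QA A t, QA A s & Z = pi (x * t + y * s)].
Proof.
rewrite (qproj_haddP mulHA mulHC mulH1 QA1 QAM QAV); split.
  by move=> [t [s [q [Gt Gs /= -> ->]]]]; exists t, s.
by move=> [t [s [Gt Gs ->]]]; exists t, s, (x * t + y * s).
Qed.

Lemma piN (x : A) : hneg (pi x) = pi (- x).
Proof. by apply: qprojN mulHA mulHC mulH1 QA1 QAM QAV _ _ => y g _; rewrite /= mulNr. Qed.

Lemma pi_scale (x g : A) : QA A g -> pi (x * g) = pi x.
Proof. by move=> Gg; apply/esym/pi_eqP; exists g. Qed.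

Lemma pi_eq0 (f : A) : pi f = pi 0 -> f = 0.
Proof.
move/pi_eqP => [g /QA_neq0 Gg /esym /eqP]; rewrite mulf_eq0 (negPf Gg) orbF.
by move/eqP.
Qed.

Lemma pi_neq0 (f : A) : f != 0 -> pi f <> pi 0.
Proof. by move=> /eqP hf /pi_eq0. Qed.

Section Ideal.
Variables (J : set HA) (hJ : hyperideal J).

Lemma hideal_sub (a b r : A) : J a -> J b -> J (a - r * b).
Proof. by move=> Ja Jb; exact: (proj2 hJ a b r Ja Jb). Qed.

Lemma hideal0 : J 0.
Proof. by have [a Ja] := proj1 hJ; have := hideal_sub 1 Ja Ja; rewrite mul1r subrr. Qed.

Lemma hidealMl (r b : A) : J b -> J (r * b).
Proof. by move=> Jb; have := hideal_sub (- r) hideal0 Jb; rewrite mulNr opprK add0r. Qed.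

Lemma hidealMr (r b : A) : J b -> J (b * r).
Proof. by rewrite mulrC; exact: hidealMl. Qed.

Lemma hidealD (a b : A) : J a -> J b -> J (a + b).
Proof. by move=> Ja Jb; have := hideal_sub (-1) Ja Jb; rewrite mulNr mul1r opprK. Qed.

Lemma hideal1 : J 1 -> J = setT.
Proof. by move=> J1; apply/seteqP; split => // x _; rewrite -(mulr1 x); exact: hidealMl. Qed.

End Ideal.

Lemma notin_spec1 (p : Spec HA) : ~ proj1_sig p 1.
Proof. by case: p => P [hP [nT _]] /= /(hideal1 hP). Qed.

Lemma in_spec0 (p : Spec HA) : proj1_sig p 0.
Proof. by case: p => P [hP _] /=; exact: hideal0. Qed.

Definition preim_pi (I : set R) : set HA := [set a | I (pi a)].
Definition im_pi (J : set HA) : set R := [set pi a | a in J].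

Lemma hyperideal_preim I : hyperideal I -> hyperideal (preim_pi I).
Proof.
move=> [[X IX] hI]; split.
  by have [a Ea] := qproj_surj X; exists a; rewrite /preim_pi /= -Ea.
move=> a b r Ia Ib y /= ->; rewrite /preim_pi /=.
apply: (hI (pi a) (pi b) (pi r) Ia Ib); rewrite piM piN.
by apply/pi_haddP; exists 1, 1; split; [exact: QA1 | exact: QA1 | rewrite !mulr1].
Qed.

Lemma hyperideal_im J : hyperideal J -> hyperideal (im_pi J).
Proof.
move=> hJ; split; first by exists (pi 0), 0 => //; exact: hideal0.
move=> _ _ r [a Ja <-] [b Jb <-]; have [c ->] := qproj_surj r.
rewrite piM piN => Z /pi_haddP [t [s [_ _ ->]]].
exists (a * t + - (c * b) * s) => //.
rewrite -mulNr; apply: (hidealD hJ); apply: (hidealMr hJ) => //; exact: (hidealMl hJ).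
Qed.

Lemma preim_im J : hyperideal J -> preim_pi (im_pi J) = J.
Proof.
move=> hJ; apply/seteqP; split => a /=; last by exists a.
by move=> [b Jb /pi_eqP [g _ ->]]; exact: hidealMr.
Qed.

Lemma im_preim I : im_pi (preim_pi I) = I.
Proof.
apply/seteqP; split => X /=; first by move=> [a Ia <-].
by move=> IX; have [a Ea] := qproj_surj X; exists a; rewrite // /preim_pi /= -Ea.
Qed.

Lemma prime_preim I : prime_hideal I -> prime_hideal (preim_pi I).
Proof.
move=> [hI [nT pI]]; split; first exact: hyperideal_preim.
split; last by move=> x y; rewrite /preim_pi /= -piM; exact: pI.
move=> E; apply: nT; rewrite -(im_preim I) E; apply/seteqP; split => // X _.
by have [a ->] := qproj_surj X; exists a.
Qed.

Lemma prime_im J : prime_hideal J -> prime_hideal (im_pi J).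
Proof.
move=> [hJ [nT pJ]]; split; first exact: hyperideal_im.
split.
  by move=> E; apply/nT/(hideal1 hJ); rewrite -(preim_im hJ) /preim_pi E.
move=> X Y; have [x ->] := qproj_surj X; have [y ->] := qproj_surj Y.
rewrite piM => hxy; have : preim_pi (im_pi J) (x * y) by [].
by rewrite preim_im // => /pJ [] h; [left; exists x | right; exists y].
Qed.

Definition spec_pi (p : Spec R) : Spec HA := exist _ _ (prime_preim (proj2_sig p)).
Definition spec_im (p : Spec HA) : Spec R := exist _ _ (prime_im (proj2_sig p)).

Lemma spec_imK : cancel spec_im spec_pi.
Proof. by move=> p; apply: proj1_sig_inj; rewrite /= preim_im //; case: (proj2_sig p). Qed.

Lemma spec_piK : cancel spec_pi spec_im.
Proof. by move=> p; apply: proj1_sig_inj; rewrite /= im_preim. Qed.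

Lemma spec_pi_bij : bijective spec_pi.
Proof. exact: Bijective spec_piK spec_imK. Qed.

Lemma zopen_spec_pi (W : set (Spec HA)) : zopen W <-> zopen (spec_pi @^-1` W).
Proof.
split.
  move=> [I [hI EI]]; exists (im_pi I); split; first exact: hyperideal_im.
  apply/seteqP; split => q /=.
    move=> nW; have : (~` W) (spec_pi q) by [].
    by rewrite EI /= => sI _ [a Ia <-]; exact: sI.
  move=> sI; have : (~` W) (spec_pi q); last by [].
  by rewrite EI /= => a Ia; apply: sI; exists a.
move=> [I [hI EI]]; exists (preim_pi I); split; first exact: hyperideal_preim.
apply/seteqP; split => p /=.
  move=> nW; have : (~` (spec_pi @^-1` W)) (spec_im p) by rewrite /= spec_imK.
  rewrite EI /= => sI a /sI h.
  by rewrite -(preim_im (proj1 (proj2_sig p))).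
move=> sI; rewrite -(spec_imK p).
have : (~` (spec_pi @^-1` W)) (spec_im p); last by [].
rewrite EI /= => X IX; have [a Ea] := qproj_surj X.
by exists a => //; apply: sI; rewrite /preim_pi /= -Ea.
Qed.

End QuotientByRationals.

Section CancellativeInstances.
Local Open Scope ring_scope.
Variable A : idomainType.
Hypothesis hQ : forall n : nat, ((n.+1)%:R : A) \is a GRing.unit.

Local Notation HA := (ring_hs A).
Local Notation R := (quot (QA A)).
Local Notation pi := (qproj (QA A)).

Lemma prime_hideal_zero : @prime_hideal HA [set 0].
Proof.
split; first split.
- by exists 0.
- by move=> a b r /= -> -> y ->; rewrite mulr0 subrr.
split.
  move=> E; have : [set 0 : A] 1 by rewrite E.
  by move=> /= /eqP; rewrite oner_eq0.
by move=> x y /= /eqP; rewrite mulf_eq0 => /orP [] /eqP; [left | right].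
Qed.

Definition generic_pt : Spec HA := exist _ _ prime_hideal_zero.

Lemma zopen_basic (g : HA) : zopen [set q : Spec HA | ~ proj1_sig q g].
Proof.
exists [set c * g | c in [set: A]]; split.
  split; first by exists g, 1; rewrite ?mul1r.
  move=> _ _ r [c _ <-] [d _ <-] y /= ->; exists (c - r * d) => //.
  by rewrite mulrBl mulrA.
apply/seteqP; split => q /=.
  by move=> /contrapT qg _ [c _ <-]; apply: (hidealMl (proj1 (proj2_sig q))).
by move=> h ng; apply/ng/h; exists 1; rewrite ?mul1r.
Qed.

Definition ring_cspec : cancellative_spec HA :=
  @CancellativeSpec HA 1 0 (@mulrA A) (@mulrC A) (@mul1r A)
    (fun x y w (hx : x <> 0) => @mulfI A x (introN eqP hx) y w)
    (@notin_spec1 A) (@in_spec0 A) generic_pt erefl zopen_basic.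

Lemma quot_mulA (x y w : R) : hmul x (hmul y w) = hmul (hmul x y) w.
Proof.
have [a ->] := qproj_surj x; have [b ->] := qproj_surj y; have [c ->] := qproj_surj w.
by rewrite !(piM hQ) mulrA.
Qed.

Lemma quot_mulC (x y : R) : hmul x y = hmul y x.
Proof.
by have [a ->] := qproj_surj x; have [b ->] := qproj_surj y; rewrite !(piM hQ) mulrC.
Qed.

Lemma quot_mul1 (x : R) : hmul (pi 1) x = x.
Proof. by have [a ->] := qproj_surj x; rewrite (piM hQ) mul1r. Qed.

Lemma quot_mulI (x y w : R) : x <> pi 0 -> hmul x y = hmul x w -> y = w.
Proof.
have [a ->] := qproj_surj x; have [b ->] := qproj_surj y; have [c ->] := qproj_surj w.
move=> ha; rewrite !(piM hQ) => /(pi_eqP hQ) [g Gg E]; apply/(pi_eqP hQ); exists g => //.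
have a0 : a != 0 by apply: contra_notN ha => /eqP ->.
by apply: (mulfI a0); rewrite E mulrA.
Qed.

Lemma generic_spec_im : proj1_sig (spec_im hQ generic_pt) = [set pi 0].
Proof. by apply/seteqP; split => X /=; [move=> [a -> <-] | move=> ->; exists 0]. Qed.

Lemma zopen_basic_quot (G : R) : zopen [set q : Spec R | ~ proj1_sig q G].
Proof.
have [g ->] := qproj_surj G.
have -> : [set q : Spec R | ~ proj1_sig q (pi g)] =
    spec_pi hQ @^-1` [set q | ~ proj1_sig q g].
  by apply/seteqP; split.
exact/zopen_spec_pi/zopen_basic.
Qed.

Definition quot_cspec : cancellative_spec R :=
  @CancellativeSpec R (pi 1) (pi 0) quot_mulA quot_mulC quot_mul1 quot_mulI
    (fun p => @notin_spec1 A (spec_pi hQ p)) (fun p => @in_spec0 A (spec_pi hQ p))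
    (spec_im hQ generic_pt) generic_spec_im zopen_basic_quot.

End CancellativeInstances.

Lemma ladd_cls (A : idomainType) (x : Spec (ring_hs A)) (c d e : loc x) (a f b g : A) :
  isrep x (proj1_sig c) a f -> isrep x (proj1_sig d) b g -> ladd c d e ->
  proj1_sig e = cls x (a * g + f * b)%R (f * g)%R.
Proof.
move=> [hf Ec] [hg Ed] [r1 [t1 [r2 [t2 [y [[h1 E1] [[h2 E2] [/= -> ->]]]]]]]].
rewrite Ec in E1; rewrite Ed in E2.
have [u1 hu1 /= Eu1] := cls_eq_inv (ring_cspec A) h1 E1.
have [u2 hu2 /= Eu2] := cls_eq_inv (ring_cspec A) h2 E2.
apply: (cls_eq (ring_cspec A) (u := (u1 * u2)%R)); try exact: prime_notM.
rewrite /=.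
have -> : (u1 * u2 * ((r1 * t2 + t1 * r2) * (f * g)) =
   (u1 * (r1 * f)) * (u2 * t2 * g) + (u2 * (r2 * g)) * (u1 * t1 * f))%R by ring.
by rewrite -Eu1 -Eu2; ring.
Qed.

Section StructureSheaf.
Local Open Scope ring_scope.
Variable A : idomainType.
Hypothesis hQ : forall n : nat, ((n.+1)%:R : A) \is a GRing.unit.
Variable U : set (Spec (ring_hs A)).
Hypothesis hU : U (generic_pt A).

Local Notation pi := (qproj (QA A)).
Local Notation OU := (OS U).
Local Notation V := (spec_pi hQ @^-1` U).

Lemma V_generic : V (spec_im hQ (generic_pt A)).
Proof. by rewrite /= spec_imK. Qed.

Local Notation germU := (@generic_germ _ (ring_cspec A) U hU).
Local Notation germV := (@generic_germ _ (quot_cspec hQ) V V_generic).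
Local Notation germU_exists := (@generic_germ_exists _ (ring_cspec A) _ hU).
Local Notation germV_exists := (@generic_germ_exists _ (quot_cspec hQ) _ V_generic).
Local Notation cst q := (const_sect (ring_cspec A) U (ratr q)).

Lemma germU_cst (q : rat) : germU (cst q) (ratr q) 1.
Proof. exact: (@generic_germ_const _ (ring_cspec A) _ hU). Qed.

Lemma QX_cst (c : OU) : QX U c <-> exists2 q, q != 0 & c = cst q.
Proof.
split; last by move=> [q hq ->]; exists q.
move=> [q [hq E]]; exists q => //; apply: generic_germ_inj (germU_cst q).
by split; [exact: notin_spec1 | exact: E].
Qed.

Lemma QX1 : QX U (const_sect (ring_cspec A) U 1).
Proof. by apply/QX_cst; exists 1; rewrite ?ratr1. Qed.

Lemma QXM (c d : OU) : QX U c -> QX U d -> QX U (hmul c d).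
Proof.
move=> /QX_cst [q hq ->] /QX_cst [r hr ->]; apply/QX_cst; exists (q * r).
  by rewrite mulf_neq0.
by rewrite /= (@const_sectM _ (ring_cspec A) _ hU) /= ratrM.
Qed.

Lemma QXV (c : OU) :
  QX U c -> exists2 c', QX U c' & hmul c c' = const_sect (ring_cspec A) U 1.
Proof.
move=> /QX_cst [q hq ->]; exists (cst q^-1).
  by apply/QX_cst; exists q^-1; rewrite ?invr_eq0.
by rewrite /= (@const_sectM _ (ring_cspec A) _ hU) /= ratrV.
Qed.

Let OU_mulA : forall s t r : OU, hmul s (hmul t r) = hmul (hmul s t) r :=
  @smulA _ (ring_cspec A) _ hU.
Let OU_mulC : forall s t : OU, hmul s t = hmul t s := @smulC _ (ring_cspec A) _ hU.
Let OU_mul1 : forall s : OU, @hmul OU (const_sect (ring_cspec A) U 1) s = s :=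
  @smul1s _ (ring_cspec A) _ hU.

Lemma qproj_eqU (s s' : OU) :
  qproj (QX U) s = qproj (QX U) s' <-> exists2 c, QX U c & s' = hmul s c.
Proof. exact: qproj_eqP OU_mulA OU_mulC OU_mul1 QX1 QXM QXV _ _. Qed.

Lemma qprojMU (s t : OU) :
  @hmul (quot (QX U)) (qproj (QX U) s) (qproj (QX U) t) = qproj (QX U) (hmul s t).
Proof. exact: qprojM OU_mulA OU_mulC OU_mul1 QX1 QXM QXV _ _. Qed.

Lemma qproj_haddU (s t : OU) Z :
  @hadd (quot (QX U)) (qproj (QX U) s) (qproj (QX U) t) Z <->
  exists c d r, [/\ QX U c, QX U d, hadd (hmul s c) (hmul t d) r & Z = qproj (QX U) r].
Proof. exact: qproj_haddP OU_mulA OU_mulC OU_mul1 QX1 QXM QXV _ _ _. Qed.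

Definition same_germ (s : OU) (S : OS V) : Prop :=
  exists a f, germU s a f /\ germV S (pi a) (pi f).

Lemma germU_neq0 (s : OU) (a f : A) : germU s a f -> f != 0.
Proof. by move=> hs; apply/eqP; exact: generic_germ_neq0 hs. Qed.

Lemma same_germ_germ (s : OU) (S : OS V) (a f : A) :
  same_germ s S -> germU s a f -> germV S (pi a) (pi f).
Proof.
move=> [a0 [f0 [hs0 hS0]]] hs.
apply: generic_germ_cross hS0 (pi_neq0 hQ (germU_neq0 hs)) _.
by rewrite !(piM hQ); congr pi; exact: generic_germ_crossE hs0 hs.
Qed.

Lemma germV_local (S : OS V) (q : pt V) (a f : A) : germV S (pi a) (pi f) ->
  exists a1 f1 w, [/\ ~ proj1_sig (proj1_sig q) (pi f1),
    germ S q = cls (proj1_sig q) (pi a1) (pi f1), QA A w & a * f1 = a1 * f * w].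
Proof.
move=> /(generic_germ_local q) [A1 [F1 [hF1 ES EA]]].
have [a1 E1] := qproj_surj A1; have [f1 E2] := qproj_surj F1; subst A1 F1.
by move: EA; rewrite !(piM hQ) => /(pi_eqP hQ) [w Gw Ew]; exists a1, f1, w.
Qed.

Lemma same_germ_exists_r (s : OU) : exists S, same_germ s S.
Proof.
have [a [f hs]] := germU_exists s.
have [S hS] : exists S, germV S (pi a) (pi f).
  apply: sect_of_generic => [|q]; first exact: pi_neq0 (germU_neq0 hs).
  pose x : pt U := exist _ (spec_pi hQ (proj1_sig q)) (proj2_sig q).
  have [a' [f' [hf' _ Ea]]] := generic_germ_local x hs.
  by exists (pi a'), (pi f'); split => //; rewrite !(piM hQ); congr pi.
by exists S, a, f.
Qed.

Lemma same_germ_exists_l (S : OS V) : exists s, same_germ s S.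
Proof.
have [A0 [F0 hS]] := germV_exists S.
have [a Ea] := qproj_surj A0; have [f Ef] := qproj_surj F0; subst A0 F0.
have [s hs] : exists s, germU s a f.
  apply: sect_of_generic => [|x].
    by move=> f0; apply: (generic_germ_neq0 hS); rewrite f0.
  have hy : V (spec_im hQ (proj1_sig x)) by rewrite /= spec_imK; exact: proj2_sig x.
  have [a1 [f1 [w [hf1 _ Gw E]]]] := germV_local (exist _ _ hy) hS.
  exists (a1 * w), f1; split; first by move=> xf1; apply: hf1; exists f1.
  by rewrite /= E mulrAC.
by exists s, a, f.
Qed.

Lemma same_germ_fun (s : OU) (S S' : OS V) : same_germ s S -> same_germ s S' -> S = S'.
Proof.
move=> hsS [a [f [hs hS']]]; apply: generic_germ_inj hS'.
exact: same_germ_germ hsS hs.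
Qed.

Lemma same_germ_qproj (s s' : OU) (S : OS V) :
  same_germ s S -> same_germ s' S -> qproj (QX U) s = qproj (QX U) s'.
Proof.
move=> [a [f [hs hS]]] [a' [f' [hs' hS']]].
have := generic_germ_crossE hS hS'; rewrite !(piM hQ).
move=> /(pi_eqP hQ) [_ [q [hq ->]] E].
apply/qproj_eqU; exists (cst q); first by apply/QX_cst; exists q.
apply: (generic_germ_inj hs').
apply: generic_germ_cross (generic_germM hs (germU_cst q)) (generic_germ_neq0 hs') _.
by rewrite /= mulr1 E; ring.
Qed.

Lemma same_germ_scale (s c : OU) (S : OS V) :
  same_germ s S -> QX U c -> same_germ (hmul s c) S.
Proof.
move=> [a [f [hs hS]]] /QX_cst [q hq ->].
exists (a * ratr q), (f * 1); split; first exact: generic_germM hs (germU_cst q).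
by rewrite mulr1 (pi_scale hQ) //; exists q.
Qed.

Lemma same_germM (s t : OU) (S T : OS V) :
  same_germ s S -> same_germ t T -> same_germ (hmul s t) (hmul S T).
Proof.
move=> [a [f [hs hS]]] [b [g [ht hT]]]; exists (a * b), (f * g).
by split; [exact: generic_germM | rewrite -!(piM hQ); exact: generic_germM].
Qed.

Lemma germU_haddE (s t r : OU) (a f b g : A) : hadd s t r ->
  germU s a f -> germU t b g -> germU r (a * g + f * b) (f * g).
Proof.
move=> hst [hf Es] [hg Et]; split; first exact: prime_notM.
exact: ladd_cls (hst _).
Qed.

Lemma germU_hadd (s t r : OU) (a f b g : A) :
  germU s a f -> germU t b g -> germU r (a * g + f * b) (f * g) -> hadd s t r.
Proof.
move=> hs ht hr x.
have [a' [f' [hf' Es Ea]]] := generic_germ_local x hs.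
have [b' [g' [hg' Et Eb]]] := generic_germ_local x ht.
have hfg : ~ proj1_sig (proj1_sig x) (f' * g') by exact: prime_notM.
exists a', f', b', g', (a' * g' + f' * b'); do 2!split => //; split => //.
have E : (a * g + f * b) * (f' * g') = (a' * g' + f' * b') * (f * g).
  move: Ea Eb => /= Ea Eb.
  have -> : (a' * g' + f' * b') * (f * g) = (a' * f) * (g' * g) + (b' * g) * (f' * f) by ring.
  by rewrite Ea Eb; ring.
exact: generic_germ_at (generic_germ_cross hr (notin_prime_neq0 hfg) E) hfg.
Qed.

Lemma sadd_exists (s t : OU) : exists r, hadd s t r.
Proof.
have [a [f hs]] := germU_exists s; have [b [g ht]] := germU_exists t.
have [r hr] : exists r, germU r (a * g + f * b) (f * g).
  apply: sect_of_generic => [|x].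
    by apply/eqP; rewrite mulf_neq0 ?(germU_neq0 hs) ?(germU_neq0 ht).
  have [a' [f' [hf' _ Ea]]] := generic_germ_local x hs.
  have [b' [g' [hg' _ Eb]]] := generic_germ_local x ht.
  exists (a' * g' + f' * b'), (f' * g'); split; first exact: prime_notM.
  move: Ea Eb => /= Ea Eb.
  have -> : (a' * g' + f' * b') * (f * g) = (a' * f) * (g' * g) + (b' * g) * (f' * f) by ring.
  by rewrite Ea Eb; ring.
by exists r; exact: germU_hadd hs ht hr.
Qed.

Lemma same_germ_hadd (s t r : OU) (S T R : OS V) :
  same_germ s S -> same_germ t T -> same_germ r R -> hadd s t r -> hadd S T R.
Proof.
move=> [a [f [hs hS]]] [b [g [ht hT]]] hrR hst q.
have hR := same_germ_germ hrR (germU_haddE hst hs ht).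
have [a1 [f1 [w [hf1 ES Gw Ew]]]] := germV_local q hS.
have [b1 [g1 [w' [hg1 ET Gw' Ew']]]] := germV_local q hT.
have hfg1 : ~ proj1_sig (proj1_sig q) (pi (f1 * g1)) by rewrite -(piM hQ); exact: prime_notM.
exists (pi a1), (pi f1), (pi b1), (pi g1), (pi (a1 * g1 * w + f1 * b1 * w')).
do 2!split => //; split; first by rewrite !(piM hQ); apply/(pi_haddP hQ); exists w, w'.
have E : (a * g + f * b) * (f1 * g1) = (a1 * g1 * w + f1 * b1 * w') * (f * g).
  have -> : (a * g + f * b) * (f1 * g1) = (a * f1) * (g * g1) + (b * g1) * (f * f1) by ring.
  by rewrite Ew Ew'; ring.
rewrite (piM hQ); apply: generic_germ_at (generic_germ_cross hR (notin_prime_neq0 hfg1) _) hfg1.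
by rewrite !(piM hQ) E.
Qed.

Let etaV : pt V := exist _ _ V_generic.

Lemma same_germ_hadd_lift (s t : OU) (S T R : OS V) :
  same_germ s S -> same_germ t T -> hadd S T R ->
  exists c d r, [/\ QX U c, QX U d, hadd (hmul s c) (hmul t d) r & same_germ r R].
Proof.
move=> [a [f [hs hS]]] [b [g [ht hT]]] hST.
have [A1 [F1 [B1 [G1 [Y [[hF1 ES] [[hG1 ET] [HY ER]]]]]]]] := hST etaV.
have [a1 ?] := qproj_surj A1; have [f1 ?] := qproj_surj F1.
have [b1 ?] := qproj_surj B1; have [g1 ?] := qproj_surj G1; subst A1 F1 B1 G1.
move: HY; rewrite !(piM hQ) => /(pi_haddP hQ) [_ [_ [[u [hu ->]] [v [hv ->]] EY]]].
have := generic_germ_crossE hS (conj hF1 ES : germV S _ _); rewrite !(piM hQ).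
move=> /(pi_eqP hQ) [_ [w [hw ->]] Ew].
have := generic_germ_crossE hT (conj hG1 ET : germV T _ _); rewrite !(piM hQ).
move=> /(pi_eqP hQ) [_ [w' [hw' ->]] Ew'].
(* The rationals u, v of the hypersum at the generic point, and w, w' relating the two
   choices of representatives, are absorbed into the constant sections c and d. *)
have hc : QX U (cst (w * u)) by apply/QX_cst; exists (w * u); rewrite ?mulf_neq0.
have hd : QX U (cst (w' * v)) by apply/QX_cst; exists (w' * v); rewrite ?mulf_neq0.
have [r hr] := sadd_exists (hmul s (cst (w * u))) (hmul t (cst (w' * v))).
exists (cst (w * u)), (cst (w' * v)), r; split => //.
have hsc := generic_germM hs (germU_cst (w * u)).
have htd := generic_germM ht (germU_cst (w' * v)).
eexists _, _; split; first exact: germU_haddE hr hsc htd.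
have hFG := prime_notM hF1 hG1; apply: generic_germ_cross (conj hFG ER : germV R _ _) _ _.
  by apply: (pi_neq0 hQ); rewrite /= !mulr1 mulf_neq0 ?(germU_neq0 hs) ?(germU_neq0 ht).
rewrite EY !(piM hQ); congr pi; rewrite /= !(ratrM hQ) !mulr1.
have -> : (a1 * g1 * ratr u + f1 * b1 * ratr v) * (f * g) =
  (a1 * f) * (g1 * ratr u * g) + (b1 * g) * (f1 * ratr v * f) by ring.
by rewrite Ew Ew'; ring.
Qed.

Definition sect_lift (S : OS V) : OU := proj1_sig (cid (same_germ_exists_l S)).
Definition sect_push (s : OU) : OS V := proj1_sig (cid (same_germ_exists_r s)).

Lemma same_germ_lift (S : OS V) : same_germ (sect_lift S) S.
Proof. exact: proj2_sig (cid (same_germ_exists_l S)). Qed.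

Lemma same_germ_push (s : OU) : same_germ s (sect_push s).
Proof. exact: proj2_sig (cid (same_germ_exists_r s)). Qed.

Lemma hiso_structure_sheaf : hiso (OS V) (quot (QX U)).
Proof.
pose g S : quot (QX U) := qproj (QX U) (sect_lift S).
pose h (X : quot (QX U)) : OS V := sect_push (proj1_sig (cid (qproj_surj X))).
exists g; split.
  exists h.
    move=> S; rewrite /h; move: (proj2_sig (cid (qproj_surj (g S)))).
    move: (proj1_sig _) => b /qproj_eqU [c hc ->].
    apply: same_germ_fun (same_germ_push _) _.
    exact: same_germ_scale (same_germ_lift S) hc.
  move=> X; rewrite /h; move: (proj2_sig (cid (qproj_surj X))).
  move: (proj1_sig _) => b ->.
  exact: same_germ_qproj (same_germ_lift _) (same_germ_push b).
split.
  move=> S T; rewrite /g qprojMU; apply: same_germ_qproj (same_germ_lift _) _.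
  exact: same_germM (same_germ_lift S) (same_germ_lift T).
move=> S T; apply/seteqP; split.
  move=> _ [R hR <-]; apply/qproj_haddU.
  have [c [d [r [hc hd hr hM]]]] :=
    same_germ_hadd_lift (same_germ_lift S) (same_germ_lift T) hR.
  by exists c, d, r; split => //; exact: same_germ_qproj (same_germ_lift R) hM.
move=> Z /qproj_haddU [c [d [r [hc hd hr ->]]]]; exists (sect_push r).
  apply: same_germ_hadd (same_germ_push r) hr.
    exact: same_germ_scale (same_germ_lift S) hc.
  exact: same_germ_scale (same_germ_lift T) hd.
exact: same_germ_qproj (same_germ_lift _) (same_germ_push r).
Qed.

End StructureSheaf.

Theorem proposition4p35 (A : idomainType)
  (hQ : forall n : nat, ((n.+1)%:R : A)%R \is a GRing.unit) :
  exists phi : Spec (quot (QA A)) -> Spec (ring_hs A),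
    (forall p, proj1_sig (phi p) = [set a | proj1_sig p (qproj (QA A) a)]) /\
    bijective phi /\
    (forall W, zopen W <-> zopen (phi @^-1` W)) /\
    (forall U : set (Spec (ring_hs A)), zopen U -> U !=set0 ->
       hiso (OS (phi @^-1` U)) (quot (QX U))).
Proof.
exists (spec_pi hQ); split => //; split; first exact: spec_pi_bij.
split; first exact: zopen_spec_pi.
move=> U oU [x Ux].
exact/hiso_structure_sheaf/(zopen_generic (ring_cspec A) oU Ux).
Qed.
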